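(* Let $n\ge1$, let $\lambda=(\lambda_1\ge\cdots\ge\lambda_n\ge0)$ be a partition (padded with zeros to length $n$), and set $A_{ij}=\lambda_i-\lambda_j+j-i$ for $1\le i<j\le n$. Then $$\sum_{k_1,\dots,k_n\ge0}\Big(\prod_{1\le i<j\le n}\frac{A_{ij}+k_i-k_j}{A_{ij}}\Big)\prod_{i=1}^n\frac{(-(i-1))_{k_i}}{(1)_{k_i}}=\frac{1}{|\mathrm{SST}(\lambda,n)|}=\prod_{1\le i<j\le n}\frac{j-i}{\lambda_i-\lambda_j+j-i},$$ i.e. $F^{(n)}\big((A_{ij})\,|\,(0,-1,\dots,-(n-1))^T\,|\,(1,\dots,1)^T\,|\,(1,\dots,1)^T\big)=1/|\mathrm{SST}(\lambda,n)|$.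
   Context: $(a)_0=1$, $(a)_m=a(a+1)\cdots(a+m-1)$; the sum is finite since $(-(i-1))_{k_i}=0$ for $k_i>i-1$. Holman's function $F^{(n)}\big((A_{ij})\,|\,(a_{i})\,|\,(b_{i})\,|\,(z_i)\big)=\sum_{k_1,\dots,k_n\ge0}\prod_{i<j}\frac{A_{ij}+k_i-k_j}{A_{ij}}\prod_{i}\frac{(a_i)_{k_i}}{(b_i)_{k_i}}z_i^{k_i}$. $\mathrm{SST}(\lambda,n)$ is the set of semistandard tableaux of shape $\lambda$ with entries in $\{1,\dots,n\}$ (rows weakly increasing, columns strictly increasing), whose cardinality is $\prod_{1\le i<j\le n}\frac{\lambda_i-\lambda_j+j-i}{j-i}$. *)

From mathcomp Require Import all_boot all_order all_algebra.
Set Implicit Arguments. Unset Strict Implicit. Unset Printing Implicit Defensive.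
Import Order.TTheory GRing.Theory Num.Theory.
Local Open Scope ring_scope.

Definition poch (a : rat) (m : nat) : rat := \prod_(t < m) (a + t%:R).

(* A_{ij} = lambda_i - lambda_j + j - i (indices 0-based, difference j-i unchanged). *)
Definition Aij (n : nat) (lam : 'I_n -> nat) (i j : 'I_n) : rat :=
  (lam i)%:R - (lam j)%:R + (j : nat)%:R - (i : nat)%:R.

(* Summand of Holman's series F^{(n)}((A_ij) | a | b | z) at multi-index k. *)
Definition holman_term (n : nat) (A : 'I_n -> 'I_n -> rat)
  (a b z : 'I_n -> rat) (k : 'I_n -> nat) : rat :=
  (\prod_(i < n) \prod_(j < n | (i < j)%N)
      ((A i j + (k i)%:R - (k j)%:R) / A i j))
  * \prod_(i < n) (poch (a i) (k i) / poch (b i) (k i) * z i ^+ k i).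

From mathcomp Require Import all_boot all_order all_algebra.
From mathcomp Require Import all_fingroup ring.
Set Implicit Arguments. Unset Strict Implicit. Unset Printing Implicit Defensive.
Import Order.TTheory GRing.Theory Num.Theory.
Local Open Scope ring_scope.

(* Put u_i = i - lam_i, so that A_ij = u_j - u_i and the Holman summand at k
   is V(u - k) / V(u) * prod_i (-1)^(k_i) C(i, k_i), with V the Vandermonde
   product.  Writing V(u - k) as a Vandermonde determinant and summing over k
   by multilinearity gives det [sum_t (-1)^t C(j, t) (u_j - t)^m]_(m, j); its
   entries are j-th backward differences of z^m, which vanish for m < j and
   equal j! for m = j.  The matrix is thus triangular with determinant
   prod_j j! = V(0, 1, ..., n - 1). *)

Section BackwardDifference.

Variable R : comPzRingType.

Definition bdiff_pow (j m : nat) (z : R) : R :=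
  \sum_(t < j.+1) (-1) ^+ t * ('C(j, t))%:R * (z - t%:R) ^+ m.

Lemma bdiff_pow0 j z : bdiff_pow j 0 z = (j == 0)%:R.
Proof.
rewrite /bdiff_pow; under eq_bigr do rewrite expr0 mulr1.
have := exprDn (1 : R) (-1) j; rewrite subrr expr0n => ->.
by apply: eq_bigr => t _; rewrite expr1n mul1r mulr_natr.
Qed.

Lemma bdiff_powS j m z :
  bdiff_pow j.+1 m.+1 z = z * bdiff_pow j.+1 m z + j.+1%:R * bdiff_pow j m (z - 1).
Proof.
have -> : bdiff_pow j.+1 m.+1 z = z * bdiff_pow j.+1 m z -
    \sum_(t < j.+2) (-1) ^+ t * ('C(j.+1, t))%:R * (z - t%:R) ^+ m * t%:R.
  by rewrite /bdiff_pow mulr_sumr -sumrB; apply: eq_bigr => t _; rewrite exprSr; ring.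
rewrite big_ord_recl /= mulr0 add0r mulr_sumr -sumrN; congr (_ + _).
rewrite /bdiff_pow mulr_sumr; apply: eq_bigr => t _; rewrite /bump leq0n add1n.
have binS : ('C(j.+1, t.+1)%:R * t.+1%:R : R) = j.+1%:R * 'C(j, t)%:R.
  by rewrite -!natrM mulnC -mul_bin_diag.
have -> : z - t.+1%:R = z - 1 - t%:R by rewrite -natr1; ring.
transitivity ((-1) ^+ t * ('C(j.+1, t.+1)%:R * t.+1%:R) * (z - 1 - t%:R) ^+ m).
  by rewrite exprS; ring.
by rewrite binS; ring.
Qed.

Lemma bdiff_pow_le j m z :
  (m <= j)%N -> bdiff_pow j m z = (m == j)%:R * (j`!)%:R.
Proof.
elim: m j z => [|m IHm] j z le_mj.
  by rewrite bdiff_pow0; case: j {le_mj} => [|j]; rewrite ?mul1r ?mul0r.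
case: j le_mj => [//|j] lt_mj.
rewrite bdiff_powS !IHm ?(ltnW lt_mj) // ltn_eqF // eqSS factS natrM /=; ring.
Qed.

Lemma bdiff_pow_widen p j m z : (j < p)%N ->
  \sum_(t < p) (-1) ^+ t * ('C(j, t))%:R * (z - t%:R) ^+ m = bdiff_pow j m z.
Proof.
move=> lt_jp; rewrite /bdiff_pow.
rewrite [RHS](big_ord_widen p (fun t => (-1) ^+ t * ('C(j, t))%:R * (z - t%:R) ^+ m)) //.
rewrite [RHS]big_mkcond /=; apply: eq_bigr => t _; case: ifP => // /negbT.
by rewrite -leqNgt => lt_jt; rewrite bin_small // mulr0 mul0r.
Qed.

Lemma det_bdiff_pow n (y : 'I_n -> R) :
  \det (\matrix_(m < n, j < n)
          \sum_(t < n) (-1) ^+ t * ('C(j, t))%:R * (y j - t%:R) ^+ m)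
  = \prod_(j < n) (j`!)%:R.
Proof.
rewrite det_trig.
  by apply: eq_bigr => j _; rewrite mxE bdiff_pow_widen // bdiff_pow_le // eqxx mul1r.
apply/is_trig_mxP => m j lt_mj.
by rewrite mxE bdiff_pow_widen // bdiff_pow_le ?(ltnW lt_mj) // ltn_eqF // mul0r.
Qed.

End BackwardDifference.

Section Vandermonde.

Variable R : comPzRingType.

Definition vandermonde n (y : 'I_n -> R) : R :=
  \prod_(i < n) \prod_(j < n | (i < j)%N) (y j - y i).

Lemma vandermonde_expand n (y : 'I_n -> R) :
  vandermonde y = \sum_(s : 'S_n) (-1) ^+ s * \prod_j y j ^+ s j.
Proof.
have := det_Vandermonde (\row_j y j); rewrite -det_tr /determinant => detV.
transitivity (\prod_(i < n) \prod_(j < n | (i < j)%N)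
                ((\row_j y j) 0 j - (\row_j y j) 0 i)).
  by apply: eq_bigr => i _; apply: eq_bigr => j _; rewrite !mxE.
rewrite -detV; apply: eq_bigr => s _; congr (_ * _).
by apply: eq_bigr => j _; rewrite !mxE.
Qed.

Lemma sum_vandermonde_det n (I : finType) (x c : 'I_n -> I -> R) :
  \sum_(k : {ffun 'I_n -> I}) vandermonde (fun i => x i (k i)) * \prod_i c i (k i)
  = \det (\matrix_(m < n, j < n) \sum_t c j t * x j t ^+ m).
Proof.
rewrite -det_tr /determinant.
under eq_bigr do rewrite vandermonde_expand mulr_suml.
rewrite exchange_big /=; apply: eq_bigr => s _.
under eq_bigr do rewrite -mulrA.
rewrite -mulr_sumr; congr (_ * _).
transitivity (\prod_j \sum_t c j t * x j t ^+ s j).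
  rewrite bigA_distr_bigA /=; apply: eq_bigr => k _.
  by rewrite -big_split /=; apply: eq_bigr => j _; rewrite mulrC.
by apply: eq_bigr => j _; rewrite !mxE.
Qed.

Lemma prod_natr_sub m : \prod_(i < m) (m%:R - i%:R : R) = (m`!)%:R.
Proof.
elim: m => [|m IHm]; first by rewrite big_ord0.
rewrite big_ord_recl subr0 factS natrM -IHm; congr (_ * _).
by apply: eq_bigr => i _; rewrite lift0 -!natr1; ring.
Qed.

Lemma vandermonde_iota n :
  vandermonde (fun i : 'I_n => i%:R) = \prod_(j < n) (j`!)%:R.
Proof.
rewrite /vandermonde (exchange_big_dep xpredT) //=; apply: eq_bigr => j _.
by rewrite -(big_ord_widen _ (fun i => j%:R - i%:R) (ltnW (ltn_ord j))) prod_natr_sub.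
Qed.

End Vandermonde.

Lemma pochS a k : poch a k.+1 = poch a k * (a + k%:R).
Proof. by rewrite /poch big_ord_recr. Qed.

Lemma poch1 k : poch 1 k = (k`!)%:R.
Proof.
elim: k => [|k IHk]; first by rewrite /poch big_ord0.
by rewrite pochS IHk factS natrM mulrC -natr1 addrC.
Qed.

Lemma poch_oppn j k : poch (- j%:R) k = (-1) ^+ k * ('C(j, k))%:R * (k`!)%:R.
Proof.
elim: k => [|k IHk]; first by rewrite /poch big_ord0 bin0 expr0 !mul1r.
have binS : ('C(j, k.+1)%:R * k.+1%:R : rat) = 'C(j, k)%:R * (j%:R - k%:R).
  have [le_kj|lt_jk] := leqP k j.
    by rewrite -natrM mulnC mul_bin_left natrM natrB // mulrC.
  by rewrite !bin_small ?mul0r // ltnW.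
rewrite pochS IHk factS natrM.
transitivity ((-1) ^+ k.+1 * ('C(j, k.+1)%:R * k.+1%:R) * (k`!)%:R : rat); last by ring.
by rewrite binS exprS; ring.
Qed.

Lemma poch_oppn_div_fact j k : poch (- j%:R) k / poch 1 k = (-1) ^+ k * ('C(j, k))%:R.
Proof. by rewrite poch_oppn poch1 mulfK // pnatr_eq0 -lt0n fact_gt0. Qed.

Definition shift_lam n (lam : 'I_n -> nat) (i : 'I_n) : rat := i%:R - (lam i)%:R.

Lemma Aij_shift n (lam : 'I_n -> nat) i j :
  Aij lam i j = shift_lam lam j - shift_lam lam i.
Proof. by rewrite /Aij /shift_lam; ring. Qed.

Lemma holman_term_vandermonde n (lam : 'I_n -> nat) (k : 'I_n -> nat) :
  holman_term (Aij lam) (fun i => - (i : nat)%:R) (fun _ => 1) (fun _ => 1) k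
  = vandermonde (fun i => shift_lam lam i - (k i)%:R) / vandermonde (shift_lam lam)
    * \prod_i ((-1) ^+ k i * ('C(i, k i))%:R).
Proof.
rewrite /holman_term /vandermonde -prodf_div; congr (_ * _).
  apply: eq_bigr => i _; rewrite -prodf_div.
  by apply: eq_bigr => j _; rewrite Aij_shift; congr (_ / _); ring.
by apply: eq_bigr => i _; rewrite expr1n mulr1 poch_oppn_div_fact.
Qed.

Theorem theorem3p9 (n : nat) (lam : 'I_n -> nat)
  (hn : (0 < n)%N)
  (hlam : forall i j : 'I_n, (i <= j)%N -> (lam j <= lam i)%N) :
  \sum_(k : {ffun 'I_n -> 'I_n})
     holman_term (Aij lam) (fun i => - (i : nat)%:R) (fun _ => 1) (fun _ => 1)
       (fun i => (k i : nat))
  = \prod_(i < n) \prod_(j < n | (i < j)%N)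
      (((j : nat)%:R - (i : nat)%:R) / Aij lam i j).
Proof.
under eq_bigr do rewrite holman_term_vandermonde mulrAC.
rewrite -mulr_suml.
rewrite (sum_vandermonde_det (fun i (t : 'I_n) => shift_lam lam i - t%:R)
           (fun j (t : 'I_n) => (-1) ^+ t * ('C(j, t))%:R)).
rewrite det_bdiff_pow -vandermonde_iota /vandermonde -prodf_div.
by apply: eq_bigr => i _; rewrite -prodf_div; apply: eq_bigr => j _; rewrite Aij_shift.
Qed.
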